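(* Let $H$ be a triangle-free graph (possibly with loops) on $n\geq 4$ vertices, let $t\ge 0$ and $c$ be integers with $c\geq 16(nt+n^3)$, let $\Psi$ be a suited $(c+t)$-coloring of $\mathcal{E}_c(H)$, and let $x=\sqrt[4]{(nt+n^3)c^3}$. Then there exists a vertex $v\in V(H)$ such that at least $c-x$ primary colors are $v$-robust (with respect to $\Psi$).
   Context: Graphs have no multiple edges but may have loops; triangle-free means there are no three distinct pairwise adjacent vertices. For integer $c\ge1$, maps $\phi_1,\phi_2:V(H)\to[c]$ are co-proper if $\phi_1(u)\ne\phi_2(v)$ whenever $u\sim v$ in $H$. The exponential graph $\mathcal{E}_c(H)$ has vertex set $[c]^{V(H)}$, with $\phi_1\sim\phi_2$ iff they are co-proper. A proper $(c+t)$-coloring $\Psi:V(\mathcal{E}_c(H))\to[c+t]$ gives adjacent maps different colors; colors $1,\dots,c$ are primary and $c+1,\dots,c+t$ secondary. $\Psi$ is suited if $\Psi(\phi)\in\operatorname{im}(\phi)\cup\{c+1,\dots,c+t\}$ for every $\phi$. Writing $\overline{N}(v)=\{v\}\cup N(v)$ for the closed neighborhood, a primary color $b\in[c]$ is $v$-robust if for every $\phi\in\Psi^{-1}(b)$ there is $w\in\overline{N}(v)$ with $\phi(w)=b$. *)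

From HB Require Import structures.
From mathcomp Require Import all_boot all_order all_algebra.
From mathcomp Require Import reals.
Set Implicit Arguments. Unset Strict Implicit. Unset Printing Implicit Defensive.
Import Order.TTheory GRing.Theory Num.Theory.

Definition symmetric_graph (V : finType) (e : rel V) : Prop :=
  forall u v, e u v = e v u.

Definition triangle_free (V : finType) (e : rel V) : Prop :=
  forall x y z : V, x != y -> y != z -> x != z -> ~~ [&& e x y, e y z & e x z].

(* Colors [c] are represented by 'I_c (color i+1 <-> i). *)
Definition coproper (V : finType) (e : rel V) (c : nat) (phi1 phi2 : {ffun V -> 'I_c}) : Prop :=
  forall u v, e u v -> phi1 u != phi2 v.

(* Colors [c+t] are 'I_(c+t); primary colors are those with value < c. *)
Definition proper_exp_coloring (V : finType) (e : rel V) (c t : nat)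
  (Psi : {ffun V -> 'I_c} -> 'I_(c + t)) : Prop :=
  forall phi1 phi2, coproper e phi1 phi2 -> Psi phi1 != Psi phi2.

Definition suited (V : finType) (c t : nat) (Psi : {ffun V -> 'I_c} -> 'I_(c + t)) : Prop :=
  forall phi, (val (Psi phi) < c)%N -> exists u, val (phi u) = val (Psi phi).

Definition robust (V : finType) (e : rel V) (c t : nat)
  (Psi : {ffun V -> 'I_c} -> 'I_(c + t)) (v : V) (b : 'I_c) : bool :=
  [forall phi : {ffun V -> 'I_c}, (val (Psi phi) == val b) ==>
     [exists w : V, ((w == v) || e v w) && (phi w == b)]].

From HB Require Import structures.
From mathcomp Require Import all_boot all_order all_algebra.
From mathcomp Require Import reals unstable zify lra.
Import Order.TTheory GRing.Theory Num.Theory.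
Set Implicit Arguments. Unset Strict Implicit. Unset Printing Implicit Defensive.

(* Suppose every vertex v had more than 8(nt + n^3) non-robust colours.  For each such colour b
   at v fix a map phi_{v,b} of colour b that avoids b on the closed neighbourhood of v.  A map psi
   whose values psi(v) are non-robust at v, and such that psi(w) <> phi_{v,psi(v)}(y) whenever
   v <> w and y ~ w, is co-proper with every phi_{v,psi(v)}; hence Psi(psi) <> psi(v) for all v,
   and suitedness forces Psi(psi) to be secondary.  Finding psi is a list-colouring problem in
   which each choice forbids at most n values at every other vertex; choosing greedily among the
   values that few choices elsewhere forbid solves it once the lists have more than 4n^3 + 2n^2
   elements.  Repeating this t+1 times with fresh colours yields t+1 pairwise co-proper maps of
   secondary colour, which is impossible with only t secondary colours. *)

Section ConflictFreeChoice.
Variables (V T : finType) (D : V -> {set T}) (F : V -> T -> V -> {set T}) (d : nat).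
Hypothesis card_F : forall v b w, #|F v b w| <= d.
Let n := #|V|.

(* Choosing [b] at [v] forbids the values [F v b w] at [w]. *)
Definition nforbid v w a := #|[set b in D v | a \in F v b w]|.

Lemma nforbid_le v w a : nforbid v w a <= #|D v|.
Proof. by apply/subset_leq_card/subsetP => b; rewrite inE => /andP[]. Qed.

Lemma sum_nforbid v w : \sum_(a in D w) nforbid v w a <= #|D v| * d.
Proof.
rewrite -sum_nat_const /nforbid.
under eq_bigr => a _ do rewrite -sum1dep_card.
rewrite (exchange_big_dep (mem (D v))) /= => [|a b _ /andP[] //].
apply: leq_sum => b bD; rewrite sum1dep_card.
apply: leq_trans (card_F v b w); apply: subset_leq_card.
by apply/subsetP => a; rewrite inE => /and3P[].
Qed.

Definition overloaded v w := [set a in D w | #|D v| < 2 * n * nforbid v w a].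

Lemma card_overloaded v w : #|overloaded v w| <= 2 * n * d.
Proof.
have [Dv0|Dv_gt0] := posnP #|D v|.
  suff -> : overloaded v w = set0 by rewrite cards0.
  apply/setP => a; rewrite !inE.
  by have := nforbid_le v w a; rewrite Dv0 leqn0 => /eqP->; rewrite muln0 andbF.
rewrite -(leq_pmul2r Dv_gt0) mulnAC -mulnA.
apply: leq_trans (_ : \sum_(a in overloaded v w) 2 * n * nforbid v w a <= _).
  by rewrite -sum_nat_const; apply: leq_sum => a; rewrite inE => /andP[_ /ltnW].
rewrite -big_distrr leq_mul2l; apply/orP; right.
apply: leq_trans (sum_nforbid v w).
rewrite [X in _ <= X](big_setID (overloaded v w)) /= (setIidPr _) ?leq_addr //.
by apply/subsetP => a; rewrite inE => /andP[].
Qed.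

Definition safe w := D w :\: \bigcup_v overloaded v w.

Lemma card_safe w : #|D w| <= #|safe w| + 2 * n ^ 2 * d.
Proof.
rewrite /safe -(cardsID (\bigcup_v overloaded v w) (D w)) addnC leq_add2l.
apply: leq_trans (subset_leq_card (subsetIr _ _)) _.
apply: leq_trans (card_big_setU _ _ _) _.
apply: leq_trans (_ : \sum_(v : V) 2 * n * d <= _).
  by apply: leq_sum => v _; apply: card_overloaded.
by rewrite (sum_nat_cond_const xpredT) cardsT -/n; nia.
Qed.

Lemma safeP w a :
  a \in safe w -> a \in D w /\ forall v, 2 * n * nforbid v w a <= #|D v|.
Proof.
rewrite inE => /andP[/bigcupP nov aD]; split => // v; rewrite leqNgt.
by apply: contra_notN nov => ov; exists v; rewrite // inE aD.
Qed.

Hypothesis card_D : forall v, 4 * n ^ 2 * d + 2 * n * d < #|D v|.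

(* A safe value at [w] is forbidden by at most [#|D v| / 2n] choices at any [v], so the values
   already chosen rule out at most half of [D u]. *)
Lemma safe_extension (P : seq V) (s : V -> T) u :
  {in P, forall w, s w \in safe w} ->
  exists2 a, a \in safe u & {in P, forall v, a \notin F v (s v) u /\ s v \notin F u a v}.
Proof.
move=> P_safe.
set X1 := \bigcup_(v in P) F v (s v) u.
set X2 := \bigcup_(w in P) [set b in D u | s w \in F u b w].
have n_gt0 : 0 < n by apply/card_gt0P; exists u.
have card_P : #|P| <= n := max_card _.
have card_X1 : #|X1| <= n * d.
  apply: leq_trans (card_big_setU _ _ _) _.
  apply: leq_trans (_ : \sum_(v in P) d <= _); first exact: leq_sum.
  by rewrite sum_nat_const leq_mul2r card_P orbT.
have card_X2 : 2 * #|X2| <= #|D u|.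
  rewrite -(leq_pmul2l n_gt0) mulnCA mulnA.
  apply: leq_trans (_ : 2 * n * \sum_(w in P) nforbid u w (s w) <= _).
    by rewrite leq_mul2l card_big_setU orbT.
  rewrite big_distrr /=.
  apply: leq_trans (_ : \sum_(w in P) #|D u| <= _).
    by apply: leq_sum => w /P_safe /safeP[_]; apply.
  by rewrite sum_nat_const leq_mul2r card_P orbT.
have : 0 < #|safe u :\: (X1 :|: X2)|.
  have := card_safe u; have := card_D u.
  have : #|safe u :&: (X1 :|: X2)| <= #|X1| + #|X2|.
    exact: leq_trans (subset_leq_card (subsetIr _ _)) (leq_card_setU _ _).
  rewrite cardsD; move: card_X1 card_X2; set n2d := n ^ 2 * d; set nd := n * d.
  lia.
case/card_gt0P => a; rewrite in_setD in_setU negb_or => /andP[/andP[aX1 aX2] a_safe].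
exists a => // v vP; split.
  by apply: contra aX1 => av; apply/bigcupP; exists v.
apply: contra aX2 => sva; apply/bigcupP; exists v; rewrite // inE sva andbT.
by have [] := safeP a_safe.
Qed.

Lemma partial_conflict_free_choice (P : seq V) : uniq P -> exists s : V -> T,
  {in P, forall v, s v \in safe v} /\
  {in P &, forall v w, v != w -> s w \notin F v (s v) w}.
Proof.
elim: P => [_|u P IH /= /andP[uP /IH[s [P_safe P_free]]]].
  have D_inhabited v : exists a, a \in D v.
    by apply/card_gt0P; apply: leq_ltn_trans (card_D v).
  by exists (fun v => xchoose (D_inhabited v)).
have [a a_safe a_free] := safe_extension u P_safe.
pose s' x := if x == u then a else s x.
have s'E : {in P, s' =1 s}.
  by move=> x xP; rewrite /s' ifN //; apply: contraNneq uP => <-.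
exists s'; split => [v|v w].
  by rewrite inE => /predU1P[->|vP]; [rewrite /s' eqxx | rewrite s'E ?P_safe].
rewrite !inE => /predU1P[->|vP] /predU1P[->|wP]; rewrite ?eqxx //.
- by rewrite (s'E w wP) /s' eqxx => _; have [] := a_free w wP.
- by rewrite (s'E v vP) /s' eqxx => _; have [] := a_free v vP.
- by rewrite !s'E //; apply: P_free.
Qed.

Lemma conflict_free_choice : exists s : V -> T,
  (forall v, s v \in D v) /\ (forall v w, v != w -> s w \notin F v (s v) w).
Proof.
have [s [all_safe all_free]] := partial_conflict_free_choice (enum_uniq V).
exists s; split => [v|v w]; last by apply: all_free; rewrite mem_enum.
by have [] := safeP (all_safe v (mem_enum _ v)).
Qed.

End ConflictFreeChoice.

Lemma card_secondary_colors (c t : nat) : #|[set i : 'I_(c + t) | c <= i]| = t.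
Proof.
suff -> : [set i : 'I_(c + t) | c <= i] = [set rshift c j | j : 'I_t].
  by rewrite card_imset ?card_ord //; apply: rshift_inj.
apply/setP => i; rewrite inE; apply/idP/imsetP => [c_le_i|[j _ ->]]; last exact: leq_addr.
have i_lt : i - c < t by rewrite ltn_subLR // ltn_ord.
by exists (Ordinal i_lt) => //; apply: val_inj; rewrite /= subnKC.
Qed.

Section ExponentialGraph.
Variables (V : finType) (e : rel V) (c t : nat) (Psi : {ffun V -> 'I_c} -> 'I_(c + t)).
Hypotheses (Psi_proper : proper_exp_coloring e Psi) (Psi_suited : suited Psi).
Let n := #|V|.

(* The default [[ffun => b]] is only reached when [b] is robust at [v]. *)
Definition avoider v (b : 'I_c) : {ffun V -> 'I_c} :=
  odflt [ffun => b] [pick phi | (val (Psi phi) == val b) &&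
    [forall w, ((w == v) || e v w) ==> (phi w != b)]].

Lemma avoiderP v b : ~~ robust e Psi v b ->
  val (Psi (avoider v b)) = val b /\ forall w, (w == v) || e v w -> avoider v b w != b.
Proof.
rewrite /robust negb_forall => /existsP[phi]; rewrite negb_imply negb_exists.
case/andP => Psi_phi /forallP phi_avoids; rewrite /avoider.
case: pickP => [psi /andP[/eqP-> /forallP psi_avoids] | no_pick] /=.
  by split => // w; apply/implyP.
have := no_pick phi; rewrite Psi_phi /=; move/negP; case; apply/forallP => w.
by apply/implyP => vw; have := phi_avoids w; rewrite vw.
Qed.

Definition conflicts v b w := avoider v b @: [set y | e w y].

Lemma card_conflicts v b w : #|conflicts v b w| <= n.
Proof. exact: leq_trans (leq_imset_card _ _) (max_card _). Qed.

Lemma secondary_of_conflict_free (s : V -> 'I_c) :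
  (forall v, ~~ robust e Psi v (s v)) ->
  (forall v w, v != w -> s w \notin conflicts v (s v) w) ->
  c <= Psi [ffun v => s v].
Proof.
move=> s_nonrobust s_free; rewrite leqNgt; apply/negP => /Psi_suited[u psi_u].
have [Psi_avoider avoider_u] := avoiderP (s_nonrobust u).
have : coproper e [ffun v => s v] (avoider u (s u)).
  move=> x y exy; rewrite ffunE.
  have [ux|ux] := eqVneq u x; first by subst x; rewrite eq_sym avoider_u // exy orbT.
  apply: contraNneq (s_free u x ux) => ->.
  by apply/imsetP; exists y; rewrite ?inE.
move/Psi_proper/eqP; apply; apply: val_inj.
by rewrite Psi_avoider -psi_u ffunE.
Qed.

Section ManyNonrobust.
Hypothesis many_nonrobust :
  forall v, 8 * (n * t + n ^ 3) < #|~: [set b | robust e Psi v b]|.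

Lemma secondary_avoiding (U : {set 'I_c}) : #|U| <= n * t ->
  exists psi : {ffun V -> 'I_c}, c <= Psi psi /\ forall v, psi v \notin U.
Proof.
move=> card_U; pose D v := ~: [set b | robust e Psi v b] :\: U.
have card_D v : 4 * n ^ 2 * n + 2 * n * n < #|D v|.
  have := many_nonrobust v; rewrite /D cardsD.
  have : #|~: [set b | robust e Psi v b] :&: U| <= #|U| by apply/subset_leq_card/subsetIr.
  move: card_U; nia.
have [s [s_D s_free]] := conflict_free_choice card_conflicts card_D.
exists [ffun v => s v]; split => [|v].
  apply: secondary_of_conflict_free => // v.
  by have := s_D v; rewrite !inE => /andP[].
by rewrite ffunE; have := s_D v; rewrite inE => /andP[].
Qed.

Lemma secondary_coproper_family k : 0 < n -> k <= t.+1 ->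
  exists S : {set {ffun V -> 'I_c}}, [/\ #|S| = k, {in S, forall psi, c <= Psi psi}
    & {in S &, forall p q, p != q -> coproper e p q}].
Proof.
move=> /card_gt0P[v0 _]; elim: k => [_|k IH k_lt].
  by exists set0; split=> [|p|p]; rewrite ?cards0 ?inE.
have [S [card_S S_secondary S_coproper]] := IH (ltnW k_lt).
set U := \bigcup_(p in S) [set p v | v : V].
have card_U : #|U| <= n * t.
  apply: leq_trans (card_big_setU _ _ _) _.
  apply: leq_trans (_ : \sum_(p in S) n <= _).
    by apply: leq_sum => p _; apply: leq_imset_card.
  by rewrite sum_nat_const card_S mulnC leq_mul2l -ltnS k_lt orbT.
have [psi [psi_secondary psi_U]] := secondary_avoiding card_U.
have psi_new p x y : p \in S -> psi x != p y.
  move=> pS; apply: contraNneq (psi_U x) => ->.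
  by apply/bigcupP; exists p => //; apply: imset_f.
have psi_S : psi \notin S by apply/negP => /(psi_new psi v0 v0); rewrite eqxx.
exists (psi |: S); split.
- by rewrite cardsU1 psi_S card_S.
- by move=> p /setU1P[->|/S_secondary].
move=> p q /setU1P[->|pS] /setU1P[->|qS]; rewrite ?eqxx //.
- by move=> _ x y _; apply: psi_new.
- by move=> _ x y _; rewrite eq_sym psi_new.
- exact: S_coproper.
Qed.

End ManyNonrobust.

Lemma exists_vertex_few_nonrobust : 0 < n ->
  exists v, #|~: [set b | robust e Psi v b]| <= 8 * (n * t + n ^ 3).
Proof.
move=> n_gt0; apply/existsP; rewrite -[X in is_true X]negbK negb_exists.
apply/negP => /forallP many_nonrobust.
have [|S [card_S S_secondary S_coproper]] :=
  @secondary_coproper_family _ t.+1 n_gt0 (leqnn _).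
  by move=> v; rewrite ltnNge many_nonrobust.
have Psi_inj : {in S &, injective Psi}.
  by move=> p q pS qS; apply: contra_eq => pq; apply: Psi_proper; apply: S_coproper.
have : #|Psi @: S| <= t.
  rewrite -[t in _ <= t](card_secondary_colors c); apply: subset_leq_card.
  by apply/subsetP => _ /imsetP[p pS ->]; rewrite inE S_secondary.
by rewrite card_in_imset // card_S ltnn.
Qed.

End ExponentialGraph.

Lemma natr_le_sqrt_sqrt (R : rcfType) (m N : nat) :
  m ^ 4 <= N -> (m%:R <= Num.sqrt (Num.sqrt N%:R) :> R)%R.
Proof.
have sqrt_sq k : Num.sqrt ((k ^ 2)%:R : R) = k%:R%R by rewrite natrX sqrtr_sqr ger0_norm.
rewrite -(sqrt_sq m) -(sqrt_sq (m ^ 2)) -expnM -(ler_nat R) => m4_le_N.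
by rewrite !ler_sqrt ?sqrtr_ge0 ?ler0n.
Qed.

Theorem lemma5 (R : realType) (V : finType) (e : rel V) (t c : nat)
  (Psi : {ffun V -> 'I_c} -> 'I_(c + t)) :
  symmetric_graph e -> triangle_free e ->
  (4 <= #|V|)%N ->
  (16 * (#|V| * t + #|V| ^ 3) <= c)%N ->
  proper_exp_coloring e Psi -> suited Psi ->
  exists v : V,
    ((c%:R : R) - Num.sqrt (Num.sqrt (((#|V| * t + #|V| ^ 3) * c ^ 3)%N%:R))
      <= (#|[set b : 'I_c | robust e Psi v b]|)%:R)%R.
Proof.
move=> _ _ n_ge4 c_ge Psi_proper Psi_suited.
have [|v few_nonrobust] := exists_vertex_few_nonrobust Psi_proper Psi_suited.
  exact: leq_trans n_ge4.
exists v; set K := #|V| * t + #|V| ^ 3.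
have x_ge : ((8 * K)%:R <= Num.sqrt (Num.sqrt (K * c ^ 3)%:R) :> R)%R.
  apply: natr_le_sqrt_sqrt.
  have : (16 * K) ^ 3 <= c ^ 3 by rewrite leq_exp2r.
  nia.
have : c <= #|[set b | robust e Psi v b]| + 8 * K.
  by rewrite -{1}(card_ord c) -(cardsC [set b | robust e Psi v b]) leq_add2l.
rewrite -(ler_nat R) natrD; lra.
Qed.
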